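(* Let $K$ be a valued field, $d\ge 1$, and $Y\subseteq K^d$ finite and nonempty. Then there is $Y_0\subseteq Y$ with $|Y_0|\le d+1$ and $\operatorname{conv}(Y_0)=\operatorname{conv}(Y)$.
   Context: $K$ is a field with a valuation $\nu:K\to\Gamma\cup\{\infty\}$ and valuation ring $\mathcal{O}=\{x:\nu(x)\ge 0\}$. For $Y\subseteq K^d$, $\operatorname{conv}(Y)=\{\sum_{i=1}^n\alpha_iy_i: n\ge1, y_i\in Y,\alpha_i\in\mathcal{O},\sum_i\alpha_i=1\}$. *)

From HB Require Import structures.
From mathcomp Require Import all_boot all_order all_algebra.
From mathcomp Require Import finmap.
Set Implicit Arguments. Unset Strict Implicit. Unset Printing Implicit Defensive.
Import Order.TTheory GRing.Theory.
Local Open Scope ring_scope.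


Definition is_ordered_abelian_group (G : zmodType) (leG : rel G) : Prop :=
  [/\ reflexive leG, transitive leG, antisymmetric leG, total leG &
      forall x y z : G, leG x y -> leG (x + z) (y + z)].

(* Order on Gamma ∪ {∞}, with ∞ encoded as None. *)
Definition leGinf (G : zmodType) (leG : rel G) (a b : option G) : bool :=
  match a, b with
  | _, None => true
  | None, Some _ => false
  | Some x, Some y => leG x y
  end.

Definition addGinf (G : zmodType) (a b : option G) : option G :=
  match a, b with
  | Some x, Some y => Some (x + y)
  | _, _ => None
  end.

Definition is_valuation (K : fieldType) (G : zmodType) (leG : rel G)
    (nu : K -> option G) : Prop :=
  [/\ forall x : K, nu x = None <-> x = 0,
      forall x y : K, nu (x * y) = addGinf (nu x) (nu y) &
      forall x y : K, leGinf leG (nu x) (nu (x + y)) \/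
                      leGinf leG (nu y) (nu (x + y)) ].

Definition val_ring (K : fieldType) (G : zmodType) (leG : rel G)
    (nu : K -> option G) (x : K) : Prop :=
  leGinf leG (Some 0) (nu x).

Definition in_conv (K : fieldType) (G : zmodType) (leG : rel G)
    (nu : K -> option G) (d : nat) (Y : {fset 'rV[K]_d}) (x : 'rV[K]_d) : Prop :=
  exists (n : nat) (y : 'I_n -> 'rV[K]_d) (a : 'I_n -> K),
    [/\ (0 < n)%N,
        forall i, y i \in Y,
        forall i, val_ring leG nu (a i),
        \sum_(i < n) a i = 1 &
        x = \sum_(i < n) a i *: y i].

From HB Require Import structures.
From mathcomp Require Import all_boot all_order all_algebra.
From mathcomp Require Import finmap.
Set Implicit Arguments. Unset Strict Implicit. Unset Printing Implicit Defensive.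
Import Order.TTheory GRing.Theory.
Local Open Scope ring_scope.

(* The proof follows the classical real argument, with "smallest valuation"
   replacing "extremal ratio".  If Y ⊆ K^d has more than d+1 points, they are
   affinely dependent: sum_y c_y = 0 and sum_y c_y y = 0 with c ≠ 0.  Choosing
   y0 with nu(c_y0) minimal, the coefficients -c_z / c_y0 lie in the valuation
   ring O and sum to 1, so y0 ∈ conv(Y \ y0).  Removing such a point does not
   change the hull (substitute its representation), and induction on |Y|
   yields Y0 with at most d+1 points. *)

Section OrderedGroup.

Variables (G : zmodType) (leG : rel G).
Hypothesis hG : is_ordered_abelian_group leG.

Lemma leGinf_trans : transitive (leGinf leG).
Proof. by case: hG => _ tr _ _ _ [b|] [a|] [c|] //=; exact: tr. Qed.

Lemma leGinf_total : total (leGinf leG).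
Proof. by case: hG => _ _ _ t _ [a|] [b|] //=. Qed.

Lemma double_eq0 (g : G) : g + g = 0 -> g = 0.
Proof.
case: hG => _ _ anti tot mono gg; apply: anti.
by case/orP: (tot g 0) => h; have := mono _ _ g h; rewrite gg add0r h => ->.
Qed.

End OrderedGroup.

Lemma exists_min (T : eqType) (A : Type) (r : rel A) : transitive r -> total r ->
  forall (F : T -> A) (s : seq T), s != [::] ->
  exists2 z, z \in s & forall w, w \in s -> r (F z) (F w).
Proof.
move=> tr tot F; elim=> [//|a t IH] _.
have raa : r (F a) (F a) by case/orP: (tot (F a) (F a)).
case: t IH => [|b t] IH.
  by exists a => [|w]; rewrite ?inE // => /eqP ->.
case: IH => // z zt hz.
case/orP: (tot (F a) (F z)) => h.
- exists a => [|w]; first by rewrite inE eqxx.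
  by rewrite inE => /orP [/eqP ->|wt] //; exact: tr h (hz w wt).
- exists z => [|w]; first by rewrite inE zt orbT.
  by rewrite inE => /orP [/eqP ->|wt] //; exact: hz.
Qed.

Section Valuation.

Variables (K : fieldType) (G : zmodType) (leG : rel G) (nu : K -> option G).
Hypotheses (hG : is_ordered_abelian_group leG) (hnu : is_valuation leG nu).

Local Notation inO x := (val_ring leG nu x).

Lemma nu_eqNone x : nu x = None <-> x = 0.
Proof. by case: hnu. Qed.

Lemma nuM x y : nu (x * y) = addGinf (nu x) (nu y).
Proof. by case: hnu. Qed.

Lemma nu0 : nu 0 = None.
Proof. exact/nu_eqNone. Qed.

Lemma nu1 : nu 1 = Some 0.
Proof.
case E: (nu 1) => [g|]; last by move/nu_eqNone/eqP: E; rewrite oner_eq0.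
have := nuM 1 1; rewrite mulr1 E /= => -[gg].
by congr Some; apply: (@addrI _ g); rewrite addr0.
Qed.

Lemma nuN x : nu (- x) = nu x.
Proof.
have nuN1 : nu (-1) = Some 0.
  case E: (nu (-1)) => [g|]; last by move/nu_eqNone/eqP: E; rewrite oppr_eq0 oner_eq0.
  have := nuM (-1) (-1); rewrite mulrNN mulr1 nu1 E /= => -[/esym gg].
  by rewrite (double_eq0 hG gg).
by rewrite -mulN1r nuM nuN1; case: (nu x) => //= g; rewrite add0r.
Qed.

Lemma nuV x g : nu x = Some g -> nu x^-1 = Some (- g).
Proof.
move=> E; have x0 : x != 0 by apply: contraPneq E => ->; rewrite nu0.
have := nuM x x^-1; rewrite mulfV // nu1 E.
case: (nu x^-1) => //= h [gh]; congr Some.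
by apply/eqP; rewrite -addr_eq0 addrC -gh.
Qed.

Lemma inO0 : inO 0.
Proof. by rewrite /val_ring nu0. Qed.

Lemma inOD a b : inO a -> inO b -> inO (a + b).
Proof.
case: hnu => _ _ ultra ha hb; rewrite /val_ring.
by case: (ultra a b) => h; [exact: (leGinf_trans hG ha h) | exact: (leGinf_trans hG hb h)].
Qed.

Lemma inOM a b : inO a -> inO b -> inO (a * b).
Proof.
rewrite /val_ring nuM; case: (nu a) => [g|] //; case: (nu b) => [h|] //= ha hb.
case: hG => _ tr _ _ mono; apply: tr hb _.
by have := mono _ _ h ha; rewrite add0r.
Qed.

Lemma inO_sum (I : Type) (r : seq I) (P : pred I) (F : I -> K) :
  (forall i, P i -> inO (F i)) -> inO (\sum_(i <- r | P i) F i).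
Proof. by move=> hF; apply: big_ind => //; [exact: inO0 | exact: inOD]. Qed.

Lemma inO_div a c : c != 0 -> leGinf leG (nu c) (nu a) -> inO (a / c).
Proof.
move=> c0; case Ec: (nu c) => [g|]; last by move/nu_eqNone/eqP: Ec; rewrite (negbTE c0).
rewrite /val_ring nuM (nuV Ec); case: (nu a) => [h|] //= le.
by case: hG => _ _ _ _ mono; have := mono _ _ (- g) le; rewrite subrr.
Qed.

Variable d : nat.
Implicit Types (Y : {fset 'rV[K]_d}) (x y : 'rV[K]_d).

Definition in_conv_fun Y x : Prop :=
  exists f : 'rV[K]_d -> K,
    [/\ forall z, z \in Y -> inO (f z),
        \sum_(z <- Y) f z = 1 &
        x = \sum_(z <- Y) f z *: z].

Lemma sum_by_point (V : nmodType) Y n (y : 'I_n -> 'rV[K]_d) (F : 'I_n -> V) :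
  (forall i, y i \in Y) ->
  \sum_(z <- Y) \sum_(i < n | y i == z) F i = \sum_(i < n) F i.
Proof.
move=> hy; rewrite (exchange_big_dep xpredT) //=; apply: eq_bigr => i _.
rewrite (eq_bigl (fun z => z == y i)) => [|z]; last by rewrite eq_sym.
rewrite big_mkcond (big_fsetD1 (y i)) //= eqxx big1_seq ?addr0 // => z.
by rewrite /= in_fsetD1 => /andP [/negbTE ->].
Qed.

Lemma in_convE Y x : in_conv leG nu Y x <-> in_conv_fun Y x.
Proof.
split.
- case=> n [y [a [_ hy ha hs ->]]].
  exists (fun z => \sum_(i < n | y i == z) a i); split.
  + by move=> z _; apply: inO_sum.
  + by rewrite sum_by_point.
  + rewrite -(sum_by_point (fun i => a i *: y i) hy).
    by apply: eq_bigr => z _; rewrite scaler_suml; apply: eq_bigr => i /eqP ->.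
- case=> f [hf hs ->]; set s := enum_fset Y.
  have s_gt0 : (0 < size s)%N.
    by move: hs; rewrite /s; case: (enum_fset Y) => // /[!big_nil] /eqP; rewrite eq_sym oner_eq0.
  exists (size s), (fun i => s`_i), (fun i => f s`_i); split => //.
  + by move=> i; apply: mem_nth.
  + by move=> i; apply/hf/mem_nth.
  + by rewrite -hs (big_nth 0) big_mkord.
  + by rewrite (big_nth 0) big_mkord.
Qed.

Lemma in_conv_fun_fsetD1 Y y x :
  y \in Y -> in_conv_fun (Y `\ y)%fset x -> in_conv_fun Y x.
Proof.
move=> yY [f [hf hs ->]].
exists (fun z => if z == y then 0 else f z); split.
- move=> z zY; case: eqP => [_|/eqP zy]; first exact: inO0.
  by apply: hf; rewrite in_fsetD1 zy.
- rewrite (big_fsetD1 y) //= eqxx add0r -hs; apply: eq_big_seq => z.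
  by rewrite in_fsetD1 => /andP [/negbTE ->].
- rewrite [RHS](big_fsetD1 y) //= eqxx scale0r add0r; apply: eq_big_seq => z.
  by rewrite in_fsetD1 => /andP [/negbTE ->].
Qed.

(* A point lying in the hull of the other points can be removed: substitute
   its representation b into any representation f over Y. *)
Lemma in_conv_fun_remove Y y x :
  y \in Y -> in_conv_fun (Y `\ y)%fset y -> in_conv_fun Y x ->
  in_conv_fun (Y `\ y)%fset x.
Proof.
move=> yY [b [hb bs bx]] [f [hf hs ->]].
exists (fun z => f z + f y * b z); split.
- move=> z zY; apply: inOD; last by apply: inOM; [exact: hf | exact: hb].
  by apply: hf; move: zY; rewrite in_fsetD1 => /andP [].
- by rewrite big_split /= -mulr_sumr bs mulr1 -hs (big_fsetD1 _ yY) /= addrC.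
- rewrite (big_fsetD1 _ yY) /= [RHS](eq_bigr (fun z => f z *: z + f y *: (b z *: z))).
    by rewrite big_split /= -scaler_sumr -bx addrC.
  by move=> z _; rewrite scalerDl scalerA.
Qed.

(* More than d+1 points of K^d are affinely dependent: the vectors (z, 1) in
   K^(d+1) form a matrix with nontrivial left kernel. *)
Lemma affine_dependence Y : (d.+1 < #|` Y|)%N ->
  exists c : 'rV[K]_d -> K,
    [/\ exists2 y, y \in Y & c y != 0,
        \sum_(z <- Y) c z = 0 &
        \sum_(z <- Y) c z *: z = 0].
Proof.
move=> hY; set s := enum_fset Y; set m := size s.
pose A : 'M[K]_(m, d + 1) := \matrix_(k < m) row_mx s`_k (const_mx 1 : 'rV_1).
have [k0 ck0] : exists k0, row k0 (kermx A) != 0.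
  have : kermx A != 0.
    by rewrite -mxrank_eq0 -lt0n mxrank_ker subn_gt0 (leq_ltn_trans (rank_leq_col A)) ?addn1.
  case: (pickP (fun k => row k (kermx A) != 0)) => [k hk _|all_zero]; first by exists k.
  by case/eqP; apply/row_matrixP => k; rewrite row0; exact/eqP/negbFE/all_zero.
set c := row k0 (kermx A).
have cA0 : c *m A = 0 by rewrite -row_mul mulmx_ker row0.
have coord i : \sum_(k < m) c 0 k * row_mx s`_k (const_mx 1 : 'rV_1) 0 i = 0.
  transitivity ((c *m A) 0 i); last by rewrite cA0 mxE.
  by rewrite [RHS]mxE; apply: eq_bigr => k _; rewrite /A !mxE.
pose cf z := c 0 (insubd k0 (index z s)).
have cf_nth (k : 'I_m) : cf s`_k = c 0 k.
  rewrite /cf; congr (c 0 _); apply: val_inj.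
  by rewrite val_insubd index_uniq ?ltn_ord ?fset_uniq.
have sumY (V : nmodType) (F : 'rV[K]_d -> V) :
    \sum_(z <- Y) F z = \sum_(k < m) F s`_k by rewrite (big_nth 0) big_mkord.
exists cf; split.
- have [k ck] : exists k, c 0 k != 0.
    case: (pickP (fun k => c 0 k != 0)) => [k hk|all_zero]; first by exists k.
    by case/eqP: ck0; apply/rowP => k; rewrite [RHS]mxE; exact/eqP/negbFE/all_zero.
  by exists s`_k; [exact: mem_nth | rewrite cf_nth].
- rewrite sumY -[RHS](coord (rshift d ord0)); apply: eq_bigr => k _.
  by rewrite cf_nth row_mxEr !mxE mulr1.
- apply/rowP => i; rewrite sumY summxE [RHS]mxE -[RHS](coord (lshift 1 i)).
  by apply: eq_bigr => k _; rewrite cf_nth row_mxEl !mxE.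
Qed.

(* In an affine dependence, the point whose coefficient has least valuation
   lies in the O-convex hull of the remaining points. *)
Lemma dependence_in_conv_rest Y (c : 'rV[K]_d -> K) :
  (exists2 y, y \in Y & c y != 0) ->
  \sum_(z <- Y) c z = 0 -> \sum_(z <- Y) c z *: z = 0 ->
  exists2 y, y \in Y & in_conv_fun (Y `\ y)%fset y.
Proof.
move=> [y1 y1Y cy1] csum cvec.
have Y0 : enum_fset Y != [::].
  by apply: contraTneq y1Y => Ynil; rewrite -[y1 \in Y]/(y1 \in enum_fset Y) Ynil.
have [y yY ymin] := exists_min (leGinf_trans hG) (leGinf_total hG) (fun z => nu (c z)) Y0.
have cy0 : c y != 0.
  apply: contraTneq (ymin _ y1Y) => ->; rewrite nu0.
  by case E: (nu (c y1)) => //; move/nu_eqNone/eqP: E; rewrite (negbTE cy1).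
have rest_sum : \sum_(z <- (Y `\ y)%fset) c z = - c y.
  by apply/eqP; move: csum; rewrite (big_fsetD1 y) //= addrC => /eqP; rewrite addr_eq0.
have rest_vec : \sum_(z <- (Y `\ y)%fset) c z *: z = - (c y *: y).
  by apply/eqP; move: cvec; rewrite (big_fsetD1 y) //= addrC => /eqP; rewrite addr_eq0.
have ncy0 : - c y != 0 by rewrite oppr_eq0.
exists y => //; exists (fun z => c z / - c y); split.
- move=> z; rewrite in_fsetD1 => /andP [_ zY].
  by apply: inO_div => //; rewrite nuN; exact: ymin.
- by rewrite -mulr_suml rest_sum divff.
- rewrite (eq_bigr (fun z => (- c y)^-1 *: (c z *: z))) => [|z _]; last first.
    by rewrite scalerA mulrC.
  by rewrite -scaler_sumr rest_vec -scaleNr scalerA mulVf // scale1r.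
Qed.

Lemma caratheodory_fun n Y : (#|` Y| <= n)%N ->
  exists Y0 : {fset 'rV[K]_d},
    [/\ (Y0 `<=` Y)%fset, (#|` Y0| <= d.+1)%N &
        forall x, in_conv_fun Y0 x <-> in_conv_fun Y x].
Proof.
elim: n Y => [|n IH] Y hY.
  by exists Y; split => //; rewrite (leq_trans hY).
have [small|big] := leqP #|` Y| d.+1; first by exists Y.
have [c [c_nz csum cvec]] := affine_dependence big.
have [y yY y_rest] := dependence_in_conv_rest c_nz csum cvec.
have [|Y0 [sub card hull]] := IH (Y `\ y)%fset.
  by move: hY; rewrite (cardfsD1 y Y) yY.
exists Y0; split => // [|x].
  exact: fsubset_trans sub (fsubsetDl _ _).
rewrite hull; split; [exact: in_conv_fun_fsetD1 | exact: in_conv_fun_remove].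
Qed.

End Valuation.

Theorem corollary2p8 (K : fieldType) (G : zmodType) (leG : rel G)
    (nu : K -> option G)
    (hG : is_ordered_abelian_group leG) (hnu : is_valuation leG nu)
    (d : nat) (hd : (1 <= d)%N)
    (Y : {fset 'rV[K]_d}) (hY : Y != fset0) :
  exists Y0 : {fset 'rV[K]_d},
    [/\ (Y0 `<=` Y)%fset, (#|` Y0|%fset <= d.+1)%N &
        forall x : 'rV[K]_d, in_conv leG nu Y0 x <-> in_conv leG nu Y x].
Proof.
have [Y0 [sub card hull]] := caratheodory_fun hG hnu (leqnn #|` Y|).
exists Y0; split => // x.
by rewrite !(in_convE hG hnu).
Qed.
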